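(* Let $\Lambda$ be a row-finite $k$-graph with no sources and $R$ a commutative ring with $1$. If $\Lambda$ is aperiodic, then a pair $(\alpha,\beta)\in\Lambda\times\Lambda$ with $s(\alpha)=s(\beta)$ is a cycline pair if and only if $\alpha=\beta$. In particular, $\mathcal{M}=\mathcal{D}$.
   Context: A $k$-graph is a countable category $\Lambda$ (vertices $\Lambda^0$, paths, maps $r,s$) with a degree functor $d:\Lambda\to\mathbb{N}^k$ satisfying unique factorization: if $d(\lambda)=m+n$ there are unique $\mu,\nu$ with $s(\mu)=r(\nu)$, $d(\mu)=m,d(\nu)=n$, $\lambda=\mu\nu$. $v\Lambda=\{\lambda:r(\lambda)=v\}$, $v\Lambda^n$ those of degree $n$; row-finite with no sources means each $v\Lambda^n$ is finite and nonempty. ${\rm KP}_R(\Lambda)$ is the universal $R$-algebra generated by $p_v$ ($v\in\Lambda^0$), $s_\lambda,s_{\lambda^*}$ ($d(\lambda)\ne0$) with relations (KP1) $p_v$ mutually orthogonal idempotents; (KP2) $s_\lambda s_\mu=s_{\lambda\mu}$, $s_{\mu^*}s_{\lambda^*}=s_{(\lambda\mu)^*}$, $p_{r(\lambda)}s_\lambda=s_\lambda=s_\lambda p_{s(\lambda)}$, $p_{s(\lambda)}s_{\lambda^*}=s_{\lambda^*}=s_{\lambda^*}p_{r(\lambda)}$ when $r(\mu)=s(\lambda)$; (KP3) $s_{\lambda^*}s_\mu=\delta_{\lambda,\mu}p_{s(\lambda)}$ when $d(\lambda)=d(\mu)$; (KP4) $p_v=\sum_{\lambda\in v\Lambda^n}s_\lambda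 s_{\lambda^*}$ for $n\ne0$. Convention $s_v=s_{v^*}=p_v$. $\mathcal{D}$ is the $R$-subalgebra generated by $\{s_\mu s_{\mu^*}:\mu\in\Lambda\}$. A pair $(\alpha,\beta)$ with $s(\alpha)=s(\beta)$ is a cycline pair if $s_{\alpha\gamma}s_{(\alpha\gamma)^*}=s_{\beta\gamma}s_{(\beta\gamma)^*}$ for all $\gamma\in s(\alpha)\Lambda$; $\mathcal{M}$ is the $R$-subalgebra generated by $\{s_\alpha s_{\beta^*}:(\alpha,\beta)\text{ cycline}\}$. Let $\Omega_k$ be the $k$-graph with objects $\mathbb{N}^k$, morphisms $\{(p,q):p\le q\}$, $r(p,q)=p$, $s(p,q)=q$, $(p,q)(q,t)=(p,t)$, $d(p,q)=q-p$. An infinite path is a degree-preserving functor $x:\Omega_k\to\Lambda$, with range $r(x)=x(0,0)$; for $p\in\mathbb{N}^k$, $\sigma^p(x)(m,n)=x(m+p,n+p)$. An infinite path $x$ is periodic if $\sigma^p(x)=\sigma^q(x)$ for some $p\ne q$ in $\mathbb{N}^k$, and aperiodic otherwise. $\Lambda$ is aperiodic if for every $v\in\Lambda^0$ there is an aperiodic infinite path with range $v$. *)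

From HB Require Import structures.
From mathcomp Require Import all_boot all_order all_algebra.
Set Implicit Arguments. Unset Strict Implicit. Unset Printing Implicit Defensive.
Import GRing.Theory.
Local Open Scope ring_scope.

Definition dg (k : nat) := {ffun 'I_k -> nat}.
Definition d0 (k : nat) : dg k := [ffun _ => 0%N].
Definition dadd k (m n : dg k) : dg k := [ffun i => (m i + n i)%N].
Definition dsub k (m n : dg k) : dg k := [ffun i => (m i - n i)%N].
Definition dle k (m n : dg k) : bool := [forall i, (m i <= n i)%N].

(* k-graphs: countable categories with a degree functor satisfying     *)
(* unique factorisation. Composition is a total function whose values  *)
(* on non-composable pairs are irrelevant. kcomp l m = "l m" with      *)
(* ksrc l = krng m.                                                    *)
Record kgraph (k : nat) := KGraph {
  kvert : countType;
  kpath : countType;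
  krng : kpath -> kvert;
  ksrc : kpath -> kvert;
  kid : kvert -> kpath;
  kcomp : kpath -> kpath -> kpath;
  kdeg : kpath -> dg k;
  kid_rng : forall v, krng (kid v) = v;
  kid_src : forall v, ksrc (kid v) = v;
  kcomp_rng : forall l m, ksrc l = krng m -> krng (kcomp l m) = krng l;
  kcomp_src : forall l m, ksrc l = krng m -> ksrc (kcomp l m) = ksrc m;
  kcomp_idl : forall l, kcomp (kid (krng l)) l = l;
  kcomp_idr : forall l, kcomp l (kid (ksrc l)) = l;
  kcomp_assoc : forall l m n, ksrc l = krng m -> ksrc m = krng n ->
      kcomp (kcomp l m) n = kcomp l (kcomp m n);
  kdeg_id : forall v, kdeg (kid v) = d0 k;
  kdeg_comp : forall l m, ksrc l = krng m ->
      kdeg (kcomp l m) = dadd (kdeg l) (kdeg m);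
  kfact : forall l (m n : dg k), kdeg l = dadd m n ->
      exists! mn : kpath * kpath,
        [/\ ksrc mn.1 = krng mn.2, kdeg mn.1 = m, kdeg mn.2 = n
          & l = kcomp mn.1 mn.2]
}.

Section KGraphDefs.
Variables (k : nat) (L : kgraph k).

Definition row_finite_no_sources : Prop :=
  forall (v : kvert L) (n : dg k),
    (exists s : seq (kpath L), uniq s /\
       forall l, (l \in s) <-> (krng l = v /\ kdeg l = n)) /\
    (exists l : kpath L, krng l = v /\ kdeg l = n).

(* An infinite path: a degree-preserving functor Omega_k -> Lambda,   *)
(* given by its values x p q on the morphisms (p,q), p <= q.          *)
Definition infinite_path (x : dg k -> dg k -> kpath L) : Prop :=
  (forall p, exists v, x p p = kid v) /\
  (forall p q, dle p q -> kdeg (x p q) = dsub q p) /\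
  (forall p q t, dle p q -> dle q t ->
      ksrc (x p q) = krng (x q t) /\ x p t = kcomp (x p q) (x q t)).

Definition shift_eq (x : dg k -> dg k -> kpath L) (p q : dg k) : Prop :=
  forall m n, dle m n -> x (dadd m p) (dadd n p) = x (dadd m q) (dadd n q).

Definition aperiodic_path (x : dg k -> dg k -> kpath L) : Prop :=
  forall p q, p <> q -> ~ shift_eq x p q.

Definition aperiodic : Prop :=
  forall v : kvert L, exists x, infinite_path x /\
     krng (x (d0 k) (d0 k)) = v /\ aperiodic_path x.

End KGraphDefs.

Record nalg (R : comNzRingType) := NAlg {
  nacar :> lmodType R;
  namul : nacar -> nacar -> nacar;
  namulA : forall x y z, namul x (namul y z) = namul (namul x y) z;
  namulDl : forall (a : R) x y z,
      namul (a *: x + y) z = a *: namul x z + namul y z;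
  namulDr : forall (a : R) x y z,
      namul z (a *: x + y) = a *: namul z x + namul z y
}.

Definition nalg_hom (R : comNzRingType) (A B : nalg R) (f : A -> B) : Prop :=
  (forall (a : R) (x y : A), f (a *: x + y) = a *: f x + f y) /\
  (forall x y : A, f (namul x y) = namul (f x) (f y)).

Definition subalg (R : comNzRingType) (A : nalg R) (T : A -> Prop) : Prop :=
  [/\ T 0, (forall x y, T x -> T y -> T (x + y)),
      (forall (a : R) x, T x -> T (a *: x))
    & (forall x y, T x -> T y -> T (namul x y))].

Definition gen_subalg (R : comNzRingType) (A : nalg R) (S : A -> Prop) : A -> Prop :=
  fun x => forall T, subalg T -> (forall y, S y -> T y) -> T x.

(* Kumjian-Pask families. p v = p_v, s l = s_l, t l = s_{l^*}.        *)
(* Generators are given for all paths, with the paper's convention    *)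
(* s_v = s_{v^*} = p_v imposed as a relation (KP0).                   *)
Section KP.
Variables (k : nat) (L : kgraph k) (R : comNzRingType).

Definition KP_family (B : nalg R) (p : kvert L -> B) (s t : kpath L -> B) : Prop :=
  [/\
      (forall v, s (kid v) = p v /\ t (kid v) = p v),
      (forall v, namul (p v) (p v) = p v) /\
      (forall v w, v <> w -> namul (p v) (p w) = 0),
      (forall l m, ksrc l = krng m ->
          namul (s l) (s m) = s (kcomp l m) /\
          namul (t m) (t l) = t (kcomp l m)) /\
      (forall l, [/\ namul (p (krng l)) (s l) = s l,
                     namul (s l) (p (ksrc l)) = s l,
                     namul (p (ksrc l)) (t l) = t l
                   & namul (t l) (p (krng l)) = t l]),
      (forall l m, kdeg l = kdeg m ->
          namul (t l) (s m) = if l == m then p (ksrc l) else 0)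
    &
      (forall v (n : dg k), n <> d0 k -> forall sq : seq (kpath L), uniq sq ->
          (forall l, (l \in sq) <-> (krng l = v /\ kdeg l = n)) ->
          p v = \sum_(l <- sq) namul (s l) (t l))].

Definition KP_universal (A : nalg R) (p : kvert L -> A) (s t : kpath L -> A) : Prop :=
  KP_family p s t /\
  forall (B : nalg R) (q : kvert L -> B) (u w : kpath L -> B), KP_family q u w ->
    (exists f : A -> B, nalg_hom f /\
        (forall v, f (p v) = q v) /\ (forall l, f (s l) = u l) /\
        (forall l, f (t l) = w l)) /\
    (forall f g : A -> B, nalg_hom f -> nalg_hom g ->
        (forall v, f (p v) = q v) -> (forall l, f (s l) = u l) ->
        (forall l, f (t l) = w l) ->
        (forall v, g (p v) = q v) -> (forall l, g (s l) = u l) ->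
        (forall l, g (t l) = w l) -> forall x, f x = g x).

Variables (A : nalg R) (p : kvert L -> A) (s t : kpath L -> A).

Definition cycline (a b : kpath L) : Prop :=
  ksrc a = ksrc b /\
  forall g, krng g = ksrc a ->
    namul (s (kcomp a g)) (t (kcomp a g)) = namul (s (kcomp b g)) (t (kcomp b g)).

Definition diagD : A -> Prop :=
  gen_subalg (fun x => exists m, x = namul (s m) (t m)).

Definition cyclM : A -> Prop :=
  gen_subalg (fun x => exists a b, cycline a b /\ x = namul (s a) (t b)).

End KP.

(* Represent KP_R(Lambda) on R-valued functions on infinite paths: p_v, s_l and
   s_l^* act by composition with the partial maps "range is v", "delete the
   prefix l" and "prepend l", so s_m s_m^* multiplies by the indicator of the
   cylinder Z(m).  Hence if (a, b) is cycline then Z(a g) = Z(b g) for all g.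
   Take an aperiodic infinite path x with range s(a) and let g run through its
   initial segments: then a x lies in Z(b) and sigma^d(b)(a x) = x, so
   sigma^d(a) x = sigma^d(b) x; aperiodicity gives d(a) = d(b), whence a = b.
   Thus the generators of M are exactly those of D. *)

From HB Require Import structures.
From mathcomp Require Import all_boot all_order all_algebra.
From mathcomp Require Import boolp classical_sets functions.
Set Implicit Arguments. Unset Strict Implicit. Unset Printing Implicit Defensive.
Import GRing.Theory.

Section Degrees.
Variable k : nat.
Implicit Types m n d : dg k.

Lemma daddC m n : dadd m n = dadd n m.
Proof. by apply/ffunP=> i; rewrite !ffunE addnC. Qed.

Lemma daddA m n d : dadd m (dadd n d) = dadd (dadd m n) d.
Proof. by apply/ffunP=> i; rewrite !ffunE addnA. Qed.

Lemma dadd0l m : dadd (d0 k) m = m.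
Proof. by apply/ffunP=> i; rewrite !ffunE add0n. Qed.

Lemma dadd0r m : dadd m (d0 k) = m.
Proof. by apply/ffunP=> i; rewrite !ffunE addn0. Qed.

Lemma dsub0 m : dsub m (d0 k) = m.
Proof. by apply/ffunP=> i; rewrite !ffunE subn0. Qed.

Lemma daddK m n : dsub (dadd m n) m = n.
Proof. by apply/ffunP=> i; rewrite !ffunE addKn. Qed.

Lemma dsubKC m n : dle m n -> dadd m (dsub n m) = n.
Proof. by move/forallP=> le_mn; apply/ffunP=> i; rewrite !ffunE subnKC. Qed.

Lemma dle_refl m : dle m m.
Proof. exact/forallP. Qed.

Lemma dle0 m : dle (d0 k) m.
Proof. by apply/forallP=> i; rewrite ffunE. Qed.

Lemma dle_addr m n : dle m (dadd m n).
Proof. by apply/forallP=> i; rewrite ffunE leq_addr. Qed.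

Lemma dle_addl m n : dle n (dadd m n).
Proof. by apply/forallP=> i; rewrite ffunE leq_addl. Qed.

Lemma dle_add2l d m n : dle m n -> dle (dadd d m) (dadd d n).
Proof. by move/forallP=> le_mn; apply/forallP=> i; rewrite !ffunE leq_add2l. Qed.

End Degrees.

Section Factorisation.
Variables (k : nat) (L : kgraph k).
Implicit Types (l u v w : kpath L) (m n : dg k).

Lemma kid_inj : injective (@kid k L).
Proof. by move=> v w e; rewrite -(kid_rng v) e kid_rng. Qed.

Lemma kfact_uniq u v u' v' : ksrc u = krng v -> ksrc u' = krng v' ->
  kdeg u = kdeg u' -> kcomp u v = kcomp u' v' -> u = u' /\ v = v'.
Proof.
move=> e e' du E.
have dv : kdeg v = kdeg v'.
  by rewrite -(daddK (kdeg u) (kdeg v)) -kdeg_comp // E kdeg_comp // du daddK.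
have [uv [_ uniq_uv]] := kfact (kdeg_comp e).
have := uniq_uv (u', v') (And4 e' (esym du) (esym dv) E).
by rewrite (uniq_uv (u, v) (And4 e erefl erefl erefl)) => -[].
Qed.

Definition is_kfact l m (uv : kpath L * kpath L) : Prop :=
  [/\ ksrc uv.1 = krng uv.2, kdeg uv.1 = m & kcomp uv.1 uv.2 = l].

(* Outside [dle m (kdeg l)] the factorisation is an unspecified junk value. *)
Definition kfac l m : kpath L * kpath L := xget (l, l) (is_kfact l m).
Definition kpre l m := (kfac l m).1.
Definition ksuf l m := (kfac l m).2.

Lemma kfacP l m : dle m (kdeg l) -> is_kfact l m (kfac l m).
Proof.
move=> le_ml; apply: xgetPex.
have [uv [[e_uv d_uv _ l_uv] _]] := kfact (esym (dsubKC le_ml)).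
by exists uv; split.
Qed.

Section Prefix.
Variables (l : kpath L) (m : dg k).
Hypothesis le_ml : dle m (kdeg l).

Lemma ksrc_kpre : ksrc (kpre l m) = krng (ksuf l m).
Proof. by case: (kfacP le_ml). Qed.

Lemma kpre_deg : kdeg (kpre l m) = m.
Proof. by case: (kfacP le_ml). Qed.

Lemma kpre_suf : kcomp (kpre l m) (ksuf l m) = l.
Proof. by case: (kfacP le_ml). Qed.

Lemma ksuf_deg : kdeg (ksuf l m) = dsub (kdeg l) m.
Proof. by rewrite -{2}kpre_suf kdeg_comp ?kpre_deg ?daddK // ksrc_kpre. Qed.

Lemma krng_kpre : krng (kpre l m) = krng l.
Proof. by rewrite -{2}kpre_suf kcomp_rng // ksrc_kpre. Qed.

Lemma ksrc_ksuf : ksrc (ksuf l m) = ksrc l.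
Proof. by rewrite -{2}kpre_suf kcomp_src // ksrc_kpre. Qed.

End Prefix.

Lemma kfac_comp u v m : ksrc u = krng v -> kdeg u = m ->
  kpre (kcomp u v) m = u /\ ksuf (kcomp u v) m = v.
Proof.
move=> e <-.
have le_uv : dle (kdeg u) (kdeg (kcomp u v)) by rewrite kdeg_comp // dle_addr.
by apply: kfact_uniq; rewrite ?ksrc_kpre ?kpre_deg ?kpre_suf.
Qed.

Lemma kfac_compl u w m : dle m (kdeg u) -> ksrc u = krng w ->
  kpre (kcomp u w) m = kpre u m /\ ksuf (kcomp u w) m = kcomp (ksuf u m) w.
Proof.
move=> le_mu e.
have -> : kcomp u w = kcomp (kpre u m) (kcomp (ksuf u m) w).
  by rewrite -kcomp_assoc ?kpre_suf ?ksrc_kpre ?ksrc_ksuf.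
have e' : ksrc (kpre u m) = krng (kcomp (ksuf u m) w).
  by rewrite kcomp_rng ?ksrc_kpre ?ksrc_ksuf.
exact: kfac_comp e' (kpre_deg le_mu).
Qed.

Lemma kpre_kdeg l : kpre l (kdeg l) = l.
Proof.
by have [] := kfac_comp (esym (kid_rng (ksrc l))) erefl; rewrite kcomp_idr.
Qed.

Lemma kpre0 l : kpre l (d0 k) = kid (krng l).
Proof.
by have [] := kfac_comp (kid_src (krng l)) (kdeg_id _); rewrite kcomp_idl.
Qed.

Lemma ksuf0 l : ksuf l (d0 k) = l.
Proof.
by have [] := kfac_comp (kid_src (krng l)) (kdeg_id _); rewrite kcomp_idl.
Qed.

Lemma kpre_kpre l m n : dle m n -> dle n (kdeg l) -> kpre (kpre l n) m = kpre l m.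
Proof.
move=> le_mn le_nl; rewrite -{2}(kpre_suf le_nl).
by rewrite (kfac_compl _ (ksrc_kpre le_nl)).1 // kpre_deg.
Qed.

End Factorisation.

Section Tails.
Variables (k : nat) (L : kgraph k).
Implicit Types (l : kpath L) (m n d : dg k).

(* A tail [y] encodes the infinite path [x] with [tpath y n = x (0, n)]. *)
Record tail := Tail {
  tpath : dg k -> kpath L;
  tpath_deg : forall n, kdeg (tpath n) = n;
  kpre_tpath : forall m n, dle m n -> kpre (tpath n) m = tpath m }.

Implicit Types y z : tail.

Lemma tail_ext y z : tpath y =1 tpath z -> y = z.
Proof.
case: y z => f1 d1 c1 [f2 d2 c2] /= /funext E; subst f2.
by rewrite (Prop_irrelevance d1 d2) (Prop_irrelevance c1 c2).
Qed.

Definition trng y := krng (tpath y (d0 k)).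

Lemma tpath_dle y m n : dle m n -> dle m (kdeg (tpath y n)).
Proof. by rewrite tpath_deg. Qed.

Lemma krng_tpath y n : krng (tpath y n) = trng y.
Proof. by rewrite /trng -(kpre_tpath y (dle0 n)) krng_kpre // tpath_dle ?dle0. Qed.

Lemma tpath0 y : tpath y (d0 k) = kid (trng y).
Proof. by rewrite -(kpre_tpath y (dle_refl _)) kpre0. Qed.

Lemma ksrc_tpath y m n : dle m n -> ksrc (tpath y m) = krng (ksuf (tpath y n) m).
Proof. by move=> le_mn; rewrite -(kpre_tpath y le_mn) ksrc_kpre ?tpath_dle. Qed.

Lemma tpath_suf y m n : dle m n ->
  kcomp (tpath y m) (ksuf (tpath y n) m) = tpath y n.
Proof. by move=> le_mn; rewrite -(kpre_tpath y le_mn) kpre_suf ?tpath_dle. Qed.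

Definition tshift_path d y n := ksuf (tpath y (dadd d n)) d.

Lemma tshift_path_deg d y n : kdeg (tshift_path d y n) = n.
Proof. by rewrite ksuf_deg tpath_deg ?daddK // dle_addr. Qed.

Lemma kpre_tshift_path d y m n : dle m n ->
  kpre (tshift_path d y n) m = tshift_path d y m.
Proof.
move=> le_mn; have le_d := dle_add2l d le_mn.
rewrite /tshift_path -(tpath_suf y le_d).
rewrite (kfac_compl _ (ksrc_tpath y le_d)).2 ?tpath_deg ?dle_addr //.
apply: (kfac_comp _ _).1.
  by rewrite ksrc_ksuf ?(ksrc_tpath y le_d) // tpath_dle // dle_addr.
by rewrite ksuf_deg tpath_deg ?daddK // dle_addr.
Qed.

Definition tshift d y := Tail (tshift_path_deg d y) (kpre_tshift_path d y).

Definition tcons_path l y n :=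
  if ksrc l == trng y then kpre (kcomp l (tpath y n)) n else tpath y n.

Lemma tcons_path_deg l y n : kdeg (tcons_path l y n) = n.
Proof.
rewrite /tcons_path; case: eqP => e; last exact: tpath_deg.
by rewrite kpre_deg // kdeg_comp ?krng_tpath // tpath_deg dle_addl.
Qed.

Lemma kpre_tcons_path l y m n : dle m n ->
  kpre (tcons_path l y n) m = tcons_path l y m.
Proof.
move=> le_mn; rewrite /tcons_path; case: eqP => e; last exact: kpre_tpath.
rewrite kpre_kpre //; last by rewrite kdeg_comp ?krng_tpath // tpath_deg dle_addl.
have el : ksrc l = krng (tpath y m) by rewrite krng_tpath.
have em := ksrc_tpath y le_mn.
rewrite -(tpath_suf y le_mn) -kcomp_assoc // (kfac_compl _ _).1 //.
  by rewrite kdeg_comp // tpath_deg dle_addl.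
by rewrite kcomp_src.
Qed.

Definition tcons l y := Tail (tcons_path_deg l y) (kpre_tcons_path l y).

Lemma tpath_tcons l y : ksrc l = trng y -> tpath (tcons l y) (kdeg l) = l.
Proof.
move=> e; rewrite /= /tcons_path e eqxx.
by rewrite (kfac_compl _ _).1 ?dle_refl ?krng_tpath // kpre_kdeg.
Qed.

Lemma trng_tcons l y : ksrc l = trng y -> trng (tcons l y) = krng l.
Proof.
move=> e; rewrite /trng /= /tcons_path e eqxx.
by rewrite krng_kpre ?kcomp_rng ?krng_tpath ?dle0.
Qed.

Lemma trng_tshift d y : trng (tshift d y) = ksrc (tpath y d).
Proof. by rewrite /trng /= /tshift_path dadd0r -(ksrc_tpath y (dle_refl d)). Qed.

Lemma tshift_tcons l y : ksrc l = trng y -> tshift (kdeg l) (tcons l y) = y.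
Proof.
move=> e; apply: tail_ext => n; rewrite /= /tshift_path /= /tcons_path e eqxx.
have el : ksrc l = krng (tpath y n) by rewrite krng_tpath.
have le_n := dle_addl (kdeg l) n; have en := ksrc_tpath y le_n.
have hd : kdeg (kcomp l (tpath y n)) = dadd (kdeg l) n.
  by rewrite kdeg_comp // tpath_deg.
rewrite -(tpath_suf y le_n) -kcomp_assoc // (kfac_comp _ hd).1.
  exact: (kfac_comp el erefl).2.
by rewrite kcomp_src.
Qed.

Lemma tcons_tshift l y : tpath y (kdeg l) = l -> tcons l (tshift (kdeg l) y) = y.
Proof.
move=> e; have e' : ksrc l = trng (tshift (kdeg l) y) by rewrite trng_tshift e.
apply: tail_ext => n; rewrite /= /tcons_path -e' eqxx /= /tshift_path.
by rewrite -{1}e (tpath_suf y (dle_addr _ _)) kpre_tpath // dle_addl.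
Qed.

Lemma tshift0 y : tshift (d0 k) y = y.
Proof. by apply: tail_ext => n; rewrite /= /tshift_path dadd0l ksuf0. Qed.

Lemma tshiftD d m y : tshift m (tshift d y) = tshift (dadd d m) y.
Proof.
apply: tail_ext => n; rewrite /= /tshift_path /= /tshift_path -daddA.
set X := tpath y (dadd d (dadd m n)).
have hX : kdeg X = dadd d (dadd m n) by rewrite tpath_deg.
have le_d : dle d (kdeg X) by rewrite hX dle_addr.
have le_m : dle m (kdeg (ksuf X d)) by rewrite ksuf_deg // hX daddK dle_addr.
have eX : X = kcomp (kcomp (kpre X d) (kpre (ksuf X d) m)) (ksuf (ksuf X d) m).
  by rewrite kcomp_assoc ?kpre_suf ?krng_kpre ?ksrc_kpre.
rewrite {2}eX (kfac_comp _ _).2 //.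
  by rewrite kcomp_src ?ksrc_kpre ?krng_kpre.
by rewrite kdeg_comp ?kpre_deg ?ksrc_kpre ?krng_kpre.
Qed.

Lemma tcons_kid y : tcons (kid (trng y)) y = y.
Proof.
by have := @tcons_tshift (kid (trng y)) y; rewrite kdeg_id tshift0 tpath0; apply.
Qed.

Lemma tcons_comp l l' y : ksrc l = krng l' -> ksrc l' = trng y ->
  tcons l (tcons l' y) = tcons (kcomp l l') y.
Proof.
move=> e e'; set z := tcons (kcomp l l') y.
have hz : tpath z (dadd (kdeg l) (kdeg l')) = kcomp l l'.
  by rewrite -kdeg_comp // tpath_tcons // kcomp_src.
have z1 : tpath z (kdeg l) = l.
  by rewrite -(kpre_tpath z (dle_addr _ (kdeg l'))) hz (kfac_comp e erefl).1.
have z2 : tpath (tshift (kdeg l) z) (kdeg l') = l'.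
  by rewrite /= /tshift_path hz (kfac_comp e erefl).2.
rewrite -(tcons_tshift z1) -(tcons_tshift z2) tshiftD -kdeg_comp //.
by rewrite tshift_tcons // kcomp_src.
Qed.

Definition cylinder l : pred tail := fun y => tpath y (kdeg l) == l.

Lemma trng_cylinder l y : cylinder l y -> trng y = krng l.
Proof. by move/eqP <-; rewrite krng_tpath. Qed.

Lemma cylinder_kid v y : cylinder (kid v) y = (trng y == v).
Proof.
rewrite /cylinder kdeg_id tpath0.
by apply/eqP/eqP => [/kid_inj | ->].
Qed.

Lemma cylinder_tcons l y : ksrc l = trng y -> cylinder l (tcons l y).
Proof. by move=> e; rewrite /cylinder tpath_tcons. Qed.

Lemma cylinder_comp l l' y : ksrc l = krng l' ->
  cylinder (kcomp l l') y = cylinder l y && cylinder l' (tshift (kdeg l) y).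
Proof.
move=> e; rewrite /cylinder kdeg_comp //= /tshift_path.
apply/eqP/andP => [E | [/eqP E1 /eqP E2]].
  rewrite E (kfac_comp e erefl).2; split=> //; apply/eqP.
  by rewrite -(kpre_tpath y (dle_addr _ (kdeg l'))) E (kfac_comp e erefl).1.
by rewrite -(tpath_suf y (dle_addr _ (kdeg l'))) E1 E2.
Qed.

End Tails.

Local Open Scope ring_scope.

Section LinearEndomorphisms.
Variables (R : comNzRingType) (V : lmodType R).

Record lend := Lend { lapp :> V -> V; lapp_linear : linear lapp }.

Implicit Types f g h : lend.

Lemma lend_ext f g : f =1 g -> f = g.
Proof.
case: f g => f f_lin [g g_lin] /= /funext E; subst g.
by rewrite (Prop_irrelevance f_lin g_lin).
Qed.

HB.instance Definition _ := gen_eqMixin lend.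
HB.instance Definition _ := gen_choiceMixin lend.

Lemma lend0_linear : linear (fun _ : V => 0 : V).
Proof. by move=> a u v; rewrite scaler0 addr0. Qed.

Lemma lend_add_linear f g : linear (fun v => f v + g v).
Proof. by move=> a u v; rewrite !lapp_linear scalerDr addrACA. Qed.

Lemma lend_opp_linear f : linear (fun v => - f v).
Proof. by move=> a u v; rewrite lapp_linear opprD scalerN. Qed.

Lemma lend_scale_linear (c : R) f : linear (fun v => c *: f v).
Proof. by move=> a u v; rewrite lapp_linear scalerDr !scalerA mulrC. Qed.

Lemma lend_mul_linear f g : linear (f \o g).
Proof. by move=> a u v; rewrite /= !lapp_linear. Qed.

Definition lend0 := Lend lend0_linear.
Definition lend_add f g := Lend (lend_add_linear f g).
Definition lend_opp f := Lend (lend_opp_linear f).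
Definition lend_scale c f := Lend (lend_scale_linear c f).
Definition lend_mul f g := Lend (lend_mul_linear f g).

Lemma lend_addA : associative lend_add.
Proof. by move=> f g h; apply: lend_ext => v /=; rewrite addrA. Qed.

Lemma lend_addC : commutative lend_add.
Proof. by move=> f g; apply: lend_ext => v /=; rewrite addrC. Qed.

Lemma lend_add0 : left_id lend0 lend_add.
Proof. by move=> f; apply: lend_ext => v /=; rewrite add0r. Qed.

Lemma lend_addN : left_inverse lend0 lend_opp lend_add.
Proof. by move=> f; apply: lend_ext => v /=; rewrite addNr. Qed.

HB.instance Definition _ :=
  GRing.isZmodule.Build lend lend_addA lend_addC lend_add0 lend_addN.

Lemma lend_scaleA a b f : lend_scale a (lend_scale b f) = lend_scale (a * b) f.
Proof. by apply: lend_ext => v /=; rewrite scalerA. Qed.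

Lemma lend_scale1 : left_id 1 lend_scale.
Proof. by move=> f; apply: lend_ext => v /=; rewrite scale1r. Qed.

Lemma lend_scaleDr : right_distributive lend_scale +%R.
Proof. by move=> a f g; apply: lend_ext => v /=; rewrite scalerDr. Qed.

Lemma lend_scaleDl f : {morph lend_scale^~ f : a b / a + b}.
Proof. by move=> a b; apply: lend_ext => v /=; rewrite scalerDl. Qed.

HB.instance Definition _ := GRing.Zmodule_isLmodule.Build R lend
  lend_scaleA lend_scale1 lend_scaleDr lend_scaleDl.

Lemma lend_mulA f g h : lend_mul f (lend_mul g h) = lend_mul (lend_mul f g) h.
Proof. exact: lend_ext. Qed.

Lemma lend_mulDl a f g h :
  lend_mul (a *: f + g) h = a *: lend_mul f h + lend_mul g h.
Proof. exact: lend_ext. Qed.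

Lemma lend_mulDr a f g h :
  lend_mul h (a *: f + g) = a *: lend_mul h f + lend_mul h g.
Proof. by apply: lend_ext => v /=; rewrite lapp_linear. Qed.

Definition lend_nalg : nalg R := NAlg lend_mulA lend_mulDl lend_mulDr.

Lemma lapp_sum (I : Type) (r : seq I) (F : I -> lend) v :
  (\sum_(i <- r) F i) v = \sum_(i <- r) F i v.
Proof. by elim/big_rec2: _ => // i w f _ <-. Qed.

End LinearEndomorphisms.

Section PartialMapOperators.
Variables (T : Type) (R : comNzRingType).
Implicit Types (c : pred T) (phi : T -> T).

Definition pmap_fun c phi (F : T -> R^o) : T -> R^o :=
  fun y => if c y then F (phi y) else 0.

Lemma pmap_fun_linear c phi : linear (pmap_fun c phi).
Proof.
move=> a F G; apply/funext => y; rewrite /pmap_fun !addrfctE !scalrfctE.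
by case: (c y) => //; rewrite scaler0 addr0.
Qed.

Definition pmap_op c phi : @lend_nalg R (T -> R^o) :=
  Lend (pmap_fun_linear c phi).

Lemma pmap_op_mul c1 phi1 c2 phi2 :
  namul (pmap_op c1 phi1) (pmap_op c2 phi2) =
  pmap_op (fun y => c1 y && c2 (phi1 y)) (phi2 \o phi1).
Proof.
apply: lend_ext => F; apply/funext => y /=; rewrite /pmap_fun.
by case: (c1 y).
Qed.

Lemma eq_pmap_op c c' phi phi' :
  c =1 c' -> (forall y, c' y -> phi y = phi' y) -> pmap_op c phi = pmap_op c' phi'.
Proof.
move=> eq_c eq_phi; apply: lend_ext => F; apply/funext => y /=.
rewrite /pmap_fun eq_c.
by case: ifP => // cy; rewrite eq_phi.
Qed.

Lemma pmap_op_pred0 phi : pmap_op pred0 phi = 0.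
Proof. exact: lend_ext. Qed.

Lemma pmap_op_id_inj c c' : pmap_op c id = pmap_op c' id -> c =1 c'.
Proof.
move=> /(congr1 (fun f : lend _ => f (fun=> 1) : T -> R^o)) E y.
have := congr1 (@^~ y) E; rewrite /= /pmap_fun => /eqP.
by case: (c y); case: (c' y); rewrite ?oner_eq0 // eq_sym oner_eq0.
Qed.

End PartialMapOperators.

Section TailRepresentation.
Variables (k : nat) (L : kgraph k) (R : comNzRingType).
Implicit Types (l m : kpath L) (v w : kvert L).

Definition tail_alg := @lend_nalg R (tail L -> R^o).
Definition tail_p v : tail_alg := pmap_op R (fun y => trng y == v) id.
Definition tail_s l : tail_alg := pmap_op R (cylinder l) (tshift (kdeg l)).
Definition tail_t l : tail_alg := pmap_op R (fun y => trng y == ksrc l) (tcons l).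

Lemma tail_st l : namul (tail_s l) (tail_t l) = pmap_op R (cylinder l) id.
Proof.
rewrite pmap_op_mul; apply: eq_pmap_op => y; last by move=> /eqP /tcons_tshift.
by apply/andP/idP => [[] // | cyl]; rewrite trng_tshift (eqP cyl).
Qed.

Lemma tail_ts l m : kdeg l = kdeg m ->
  namul (tail_t l) (tail_s m) = if l == m then tail_p (ksrc l) else 0.
Proof.
move=> dlm; rewrite pmap_op_mul; case: eqP => [<- | ne].
  apply: eq_pmap_op => y /=; last by move=> /eqP /esym /tshift_tcons.
  by case: eqP => //= /esym /cylinder_tcons.
rewrite -(pmap_op_pred0 R id); apply: eq_pmap_op => // y /=.
case: eqP => //= /esym e; rewrite /cylinder -dlm tpath_tcons //.
exact/eqP.
Qed.

Lemma tail_p_sum v n (sq : seq (kpath L)) : uniq sq ->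
  (forall l, l \in sq <-> krng l = v /\ kdeg l = n) ->
  tail_p v = \sum_(l <- sq) namul (tail_s l) (tail_t l).
Proof.
move=> sq_uniq sq_spec; under eq_bigr do rewrite tail_st.
apply: lend_ext => F; apply/funext => y; rewrite lapp_sum fct_sumE /= /pmap_fun.
set a := tpath y n.
rewrite (eq_big_seq (fun l => if l == a then F y else 0)); last first.
  by move=> l /sq_spec [_ dl]; rewrite /cylinder dl eq_sym.
have -> : (trng y == v) = (a \in sq).
  apply/eqP/idP => [ey | /sq_spec [<- _]]; last exact: esym (krng_tpath y n).
  by apply/sq_spec; rewrite krng_tpath ey tpath_deg.
case: ifP => [a_in | a_notin].
  by rewrite (bigD1_seq a) //= eqxx big1 ?addr0 // => l /negbTE ->.
rewrite big1_seq // => l /andP [_ l_in].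
by case: eqP => // el; rewrite -el l_in in a_notin.
Qed.

Lemma tail_KP : KP_family tail_p tail_s tail_t.
Proof.
split.
- move=> v; split; apply: eq_pmap_op => y /=.
  + exact: cylinder_kid.
  + by rewrite kdeg_id tshift0.
  + by rewrite kid_src.
  + by move=> /eqP <-; exact: tcons_kid.
- split=> [v | v w ne]; rewrite pmap_op_mul.
    by apply: eq_pmap_op => y //=; rewrite andbb.
  rewrite -(pmap_op_pred0 R id); apply: eq_pmap_op => // y /=.
  by case: eqP => //= ->; apply/eqP.
- split=> [l m e | l]; split; rewrite pmap_op_mul; apply: eq_pmap_op => y //=.
  + by rewrite cylinder_comp.
  + by rewrite tshiftD kdeg_comp.
  + rewrite kcomp_src //; case: eqP => //= /esym ey.
    by rewrite trng_tcons // e eqxx.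
  + by move=> /eqP; rewrite kcomp_src // => ey; rewrite tcons_comp.
  + by apply/andP/idP => [[] // | cyl]; rewrite (trng_cylinder cyl).
  + by apply/andP/idP => [[] // | cyl]; rewrite trng_tshift (eqP cyl).
  + exact: andbb.
  + by case: eqP => //= /esym e; rewrite trng_tcons // eqxx.
- exact: tail_ts.
- move=> v n _; exact: tail_p_sum.
Qed.

End TailRepresentation.

Section InfinitePathTail.
Variables (k : nat) (L : kgraph k) (x : dg k -> dg k -> kpath L).
Hypothesis x_inf : infinite_path x.

Lemma ipath_deg p q : dle p q -> kdeg (x p q) = dsub q p.
Proof. by case: x_inf => _ [x_deg _]; apply: x_deg. Qed.

Lemma ipath_comp p q t : dle p q -> dle q t ->
  ksrc (x p q) = krng (x q t) /\ x p t = kcomp (x p q) (x q t).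
Proof. by case: x_inf => _ [_ x_comp]; apply: x_comp. Qed.

Lemma ksuf_ipath p q t : dle p q -> dle q t -> ksuf (x p t) (dsub q p) = x q t.
Proof.
move=> le_pq le_qt; have [e ->] := ipath_comp le_pq le_qt.
exact: (kfac_comp e (ipath_deg le_pq)).2.
Qed.

Lemma ipath_tail_deg n : kdeg (x (d0 k) n) = n.
Proof. by rewrite ipath_deg ?dle0 // dsub0. Qed.

Lemma kpre_ipath_tail m n : dle m n -> kpre (x (d0 k) n) m = x (d0 k) m.
Proof.
move=> le_mn; have [e ->] := ipath_comp (dle0 m) le_mn.
exact: (kfac_comp e (ipath_tail_deg m)).1.
Qed.

Definition ipath_tail := Tail ipath_tail_deg kpre_ipath_tail.

Lemma tpath_tshift_ipath d n : tpath (tshift d ipath_tail) n = x d (dadd d n).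
Proof. by rewrite /= /tshift_path -{2}(dsub0 d) ksuf_ipath ?dle0 ?dle_addr. Qed.

Lemma tshift_ipath_tail_inj : aperiodic_path x ->
  forall p q, tshift p ipath_tail = tshift q ipath_tail -> p = q.
Proof.
have shifted d m n : dle m n ->
    x (dadd m d) (dadd n d) = ksuf (tpath (tshift d ipath_tail) n) m.
  move=> le_mn; rewrite tpath_tshift_ipath -{2}(daddK d m).
  by rewrite ksuf_ipath ?dle_addr ?dle_add2l // !(daddC d).
move=> x_aper p q E; case: (pselect (p = q)) => // ne; case: (x_aper p q ne).
by move=> m n le_mn; rewrite !shifted // E.
Qed.

End InfinitePathTail.

Lemma cylinders_separate (k : nat) (L : kgraph k) (X : tail L) (a b : kpath L) :
  (forall p q, tshift p X = tshift q X -> p = q) ->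
  trng X = ksrc a -> ksrc a = ksrc b ->
  (forall n, cylinder (kcomp a (tpath X n)) =1 cylinder (kcomp b (tpath X n))) ->
  a = b.
Proof.
move=> X_aper X_rng e_ab cyl_ab.
have ea n : ksrc a = krng (tpath X n) by rewrite krng_tpath.
have eb n : ksrc b = krng (tpath X n) by rewrite -e_ab.
set y := tcons a X.
have y_a : tpath y (kdeg a) = a by apply: tpath_tcons.
have shift_a_y : tshift (kdeg a) y = X by apply: tshift_tcons.
have cyl_b_y n : cylinder b y && cylinder (tpath X n) (tshift (kdeg b) y).
  rewrite -cylinder_comp // -cyl_ab cylinder_comp // shift_a_y.
  by rewrite /cylinder y_a tpath_deg !eqxx.
have y_b : tpath y (kdeg b) = b by have /andP [/eqP] := cyl_b_y (d0 k).
have shift_b_y : tshift (kdeg b) y = X.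
  apply: tail_ext => n; have /andP [_ /eqP] := cyl_b_y n.
  by rewrite tpath_deg.
have dab : kdeg a = kdeg b.
  by apply: X_aper; rewrite -{1}shift_b_y -shift_a_y !tshiftD daddC.
by rewrite -y_a dab y_b.
Qed.

Lemma gen_subalg_ext (R : comNzRingType) (A : nalg R) (S S' : A -> Prop) :
  (forall y, S y <-> S' y) -> forall x, gen_subalg S x <-> gen_subalg S' x.
Proof. by move=> eqS x; split=> Sx T sT ST; apply: Sx => // y /eqS /ST. Qed.

Theorem lemma5p5 (k : nat) (L : kgraph k) (R : comNzRingType) (A : nalg R)
  (p : kvert L -> A) (s t : kpath L -> A) :
  KP_universal p s t ->
  row_finite_no_sources L ->
  aperiodic L ->
  (forall a b : kpath L, ksrc a = ksrc b -> (cycline s t a b <-> a = b)) /\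
  (forall x : A, cyclM s t x <-> diagD s t x).
Proof.
move=> [_ univ] _ aper.
have [[f [[_ f_mul] [_ [f_s f_t]]]] _] := univ _ _ _ _ (tail_KP L R).
have cycline_eq a b : cycline s t a b -> a = b.
  case=> e_ab cyc; have [x [x_inf [x_rng x_aper]]] := aper (ksrc a).
  have x_tail_aper := tshift_ipath_tail_inj (x_inf := x_inf) x_aper.
  apply: (cylinders_separate x_tail_aper) => // n.
  apply: (@pmap_op_id_inj _ R); rewrite -!tail_st -!f_s -!f_t -!f_mul cyc //.
  by rewrite krng_tpath.
split=> [a b _ | z]; first by split=> [/cycline_eq | <-].
apply: gen_subalg_ext => y; split.
  by case=> a [b [/[dup] /cycline_eq <- _ ->]]; exists a.
by case=> m ->; exists m, m.
Qed.
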